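(* Let $0\le\gamma\le1$ and $d\ge1$ with $\mathsf{err}(\gamma,d)>0$, and let $f\colon\{0,1\}^m\to\{0,1\}^n$ be a $d$-local function. Then there exist a set $S\subseteq[m]$ and a number $r$ with $$|S|\le\frac{\mathsf{err}(\gamma,d)^2\cdot r}{4}\quad\text{and}\quad r\ge n\cdot\left(\frac{\mathsf{err}(\gamma,d)^2}{16d}\right)^{2d+1}$$ such that for every fixing $\rho\in\{0,1\}^S$ of the input bits in $S$, the restricted function $f_\rho\colon\{0,1\}^{[m]\setminus S}\to\{0,1\}^n$ is $(d,r)$-local.
   Context: A function $f\colon\{0,1\}^m\to\{0,1\}^n$ is $d$-local if each output bit depends on at most $d$ input bits; $I_f(i)$ denotes the set of input coordinates on which output bit $i$ depends. Fixing the inputs in $S$ to $\rho$ yields $f_\rho(z')=f(\rho,z')$ for $z'\in\{0,1\}^{[m]\setminus S}$. Output bits $i_1,\dots,i_r$ of a function $g$ are non-connected if the sets $I_g(i_1),\dots,I_g(i_r)$ are pairwise disjoint. $g$ is $(d,r)$-local if it is $d$-local and has $r$ non-connected output bits. $\mathsf{err}(\gamma,t)$ is the minimum distance of $\gamma$ to an integer multiple of $2^{-t}$. *)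

From HB Require Import structures.
From mathcomp Require Import all_boot all_order all_algebra.
Set Implicit Arguments. Unset Strict Implicit. Unset Printing Implicit Defensive.
Import Order.TTheory GRing.Theory Num.Theory.

Definition flip (I : finType) (x : {ffun I -> bool}) (j : I) : {ffun I -> bool} :=
  [ffun k => if k == j then ~~ x k else x k].

Definition depends_on (I O : finType) (g : {ffun I -> bool} -> {ffun O -> bool})
  (o : O) (j : I) : bool :=
  [exists x, g (flip x j) o != g x o].

Definition Idep (I O : finType) (g : {ffun I -> bool} -> {ffun O -> bool}) (o : O)
  : {set I} := [set j | depends_on g o j].

Definition local (I O : finType) (d : nat) (g : {ffun I -> bool} -> {ffun O -> bool}) :=
  forall o : O, #|Idep g o| <= d.

Definition non_connected (I O : finType) (g : {ffun I -> bool} -> {ffun O -> bool})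
  (R : {set O}) :=
  forall o1 o2, o1 \in R -> o2 \in R -> o1 != o2 -> [disjoint Idep g o1 & Idep g o2].

Definition local_dr (I O : finType) (d r : nat) (g : {ffun I -> bool} -> {ffun O -> bool}) :=
  local d g /\ exists R : {set O}, #|R| = r /\ non_connected g R.

Definition merge (m : nat) (S : {set 'I_m})
  (rho : {ffun {j : 'I_m | j \in S} -> bool})
  (z : {ffun {j : 'I_m | j \notin S} -> bool}) : {ffun 'I_m -> bool} :=
  [ffun j => match @insub _ (fun j : 'I_m => j \in S) _ j with
             | Some k => rho k
             | None => match @insub _ (fun j : 'I_m => j \notin S) _ j with
                       | Some k => z k
                       | None => false
                       end
             end].

Definition restrict (m n : nat) (f : {ffun 'I_m -> bool} -> {ffun 'I_n -> bool})
  (S : {set 'I_m}) (rho : {ffun {j : 'I_m | j \in S} -> bool})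
  : {ffun {j : 'I_m | j \notin S} -> bool} -> {ffun 'I_n -> bool} :=
  fun z => f (merge rho z).

(* e = err(gamma, t): the minimum distance of gamma to an integer multiple of 2^-t *)
Definition is_err (R : realFieldType) (gamma : R) (t : nat) (e : R) : Prop :=
  ((exists k : int, e = `|gamma - k%:~R / 2%:R ^+ t|) /\
   forall k : int, e <= `|gamma - k%:~R / 2%:R ^+ t|)%R.

(* Call the fan-out of an input the number of outputs that depend on it, and
   split the inputs into the d+1 bands [q^k, q^(k+1)) of fan-out, k <= d.  Every
   output reads at most d inputs, so for some band k at most a d/(d+1) fraction
   of the outputs read an input of that band.  Fix all inputs of fan-out at
   least q^(k+1): there are at most nd/q^(k+1) of them.  A remaining output
   reads, outside the fixed set, only inputs of fan-out below q^k, so it shares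
   a free input with at most d q^k others and a greedy choice gives
   n/((d+1)(1 + d q^k)) outputs with pairwise disjoint free inputs, whatever
   values the fixed inputs take.  The threshold q = 8 d^2 (d+1) / err^2 balances
   the two bounds, using (d+1) err^2 <= 1, a consequence of err <= 2^-(d+1). *)

From Pilot Require Import Defs.
From HB Require Import structures.
From mathcomp Require Import all_boot all_order all_algebra.
From mathcomp Require Import zify ring lra.
Import Order.TTheory GRing.Theory Num.Theory.
Set Implicit Arguments. Unset Strict Implicit. Unset Printing Implicit Defensive.

Lemma card_bigcup_le (I T : finType) (J : {set I}) (B : I -> {set T}) :
  (#|\bigcup_(j in J) B j| <= \sum_(j in J) #|B j|)%N.
Proof.
elim/big_rec2: _ => [|j k A _ IH]; first by rewrite cards0.
by rewrite (leq_trans (leq_card_setU _ _)) ?leq_add2l.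
Qed.

Lemma sum_card_exchange (I J : finType) (P : I -> J -> bool) :
  \sum_i #|[set j | P i j]| = \sum_j #|[set i | P i j]|.
Proof.
have card_sum (T : finType) (A : {set T}) : #|A| = \sum_x (x \in A : nat).
  by rewrite -sum1_card big_mkcond.
under eq_bigr do rewrite card_sum; under [RHS]eq_bigr do rewrite card_sum.
by rewrite exchange_big; apply: eq_bigr => j _; apply: eq_bigr => i _; rewrite !inE.
Qed.

Local Open Scope ring_scope.

Definition independent (T : finType) (P : rel T) (I : {set T}) :=
  forall x y, x \in I -> y \in I -> x != y -> ~~ P x y.

Lemma greedy_independent_set (R : realFieldType) (T : finType) (P : rel T) (De : R)
    (G : {set T}) :
  symmetric P ->
  (forall o, o \in G -> #|[set o' in G | P o o']|%:R + 1 <= De) ->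
  exists2 I : {set T}, I \subset G /\ independent P I & #|G|%:R <= De * #|I|%:R.
Proof.
move=> Psym; elim: {G}_.+1 {-2}G (ltnSn #|G|) => // N IH G leGN degG.
have [->|[o oG]] := set_0Vmem G.
  by exists set0; rewrite ?cards0 ?mulr0 ?sub0set //; split=> // x y; rewrite in_set0.
pose Nb := o |: [set o' in G | P o o'].
pose G' := G :\: Nb.
have ltG' : (#|G'| < #|G|)%N.
  apply: proper_card; apply/properP; split; first exact: subsetDl.
  by exists o; rewrite // !inE eqxx.
have degG' o' : o' \in G' -> #|[set o'' in G' | P o' o'']|%:R + 1 <= De.
  rewrite inE => /andP[_ o'G]; apply: le_trans (degG o' o'G).
  rewrite lerD2r ler_nat subset_leq_card //; apply/subsetP=> x.
  by rewrite !inE => /andP[/andP[_ ->] ->].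
have [I' [sI'G' indI'] leG'] := IH G' (leq_trans ltG' leGN) degG'.
have noPo y : y \in I' -> ~~ P o y.
  move/(subsetP sI'G'); rewrite !inE negb_or => /andP[/andP[_ nPo] yG].
  by apply: contra nPo => ->; rewrite yG.
have oI' : o \notin I' by apply/negP => /(subsetP sI'G'); rewrite !inE eqxx.
exists (o |: I'); first split.
- by rewrite subUset sub1set oG (subset_trans sI'G') ?subsetDl.
- move=> x y; rewrite !inE => /predU1P[->|xI] /predU1P[->|yI]; rewrite ?eqxx //.
  + by move=> _; exact: noPo.
  + by move=> _; rewrite Psym; exact: noPo.
  + exact: indI'.
- rewrite cardsU1 oI' natrD mulrDr mulr1 -(cardsID Nb G) natrD lerD //.
  apply: le_trans (degG o oG).
  rewrite (@le_trans _ _ #|Nb|%:R) ?ler_nat ?subset_leq_card ?subsetIr //.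
  by rewrite cardsU1 natrD addrC lerD2l lern1 leq_b1.
Qed.

Section Restriction.
Variables (m n : nat) (f : {ffun 'I_m -> bool} -> {ffun 'I_n -> bool}) (S : {set 'I_m}).

Definition overlap_off : rel 'I_n :=
  fun o o' => ~~ [disjoint Idep f o :\: S & Idep f o' :\: S].

Lemma overlap_off_sym : symmetric overlap_off.
Proof. by move=> o o'; rewrite /overlap_off disjoint_sym. Qed.

Variable rho : {ffun {j : 'I_m | j \in S} -> bool}.

Lemma merge_flip (z : {ffun {j : 'I_m | j \notin S} -> bool}) j :
  Defs.merge rho (flip z j) = flip (Defs.merge rho z) (val j).
Proof.
apply/ffunP=> i; rewrite /Defs.merge /flip !ffunE.
case: insubP => [k kS ik|iS].
  have /negbTE-> // : i != val j.
  by apply: contraTneq kS => ->; exact: (valP j).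
by case: insubP => [k _ ik|]; rewrite ?iS // ffunE -ik.
Qed.

Lemma depends_on_restrict o j :
  depends_on (restrict f rho) o j -> depends_on f o (val j).
Proof.
case/existsP=> z dz; apply/existsP; exists (Defs.merge rho z).
by rewrite /restrict merge_flip in dz.
Qed.

Lemma Idep_restrict o : val @: Idep (restrict f rho) o \subset Idep f o :\: S.
Proof.
by apply/subsetP=> _ /imsetP[j + ->]; rewrite !inE (valP j) => /depends_on_restrict.
Qed.

Lemma local_restrict d : local d f -> local d (restrict f rho).
Proof.
move=> locf o; rewrite -(card_imset _ val_inj) (leq_trans _ (locf o)) //.
by rewrite subset_leq_card // (subset_trans (Idep_restrict o)) ?subsetDl.
Qed.

Lemma non_connected_restrict (Rs : {set 'I_n}) :
  independent overlap_off Rs -> non_connected (restrict f rho) Rs.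
Proof.
move=> indRs o1 o2 o1Rs o2Rs neq; rewrite -(imset_disjoint val_inj).
apply: disjointW (Idep_restrict o1) (Idep_restrict o2) _.
by have := indRs o1 o2 o1Rs o2Rs neq; rewrite negbK.
Qed.

End Restriction.

Section FanOut.
Variables (R : realFieldType) (m n d : nat) (f : {ffun 'I_m -> bool} -> {ffun 'I_n -> bool}).
Variable q : R.
Hypotheses (q_ge1 : 1 <= q) (locf : local d f).

Definition fanout j := #|[set o | j \in Idep f o]|.

Lemma sum_fanout : (\sum_j fanout j <= n * d)%N.
Proof.
rewrite /fanout -sum_card_exchange -[n in (n * d)%N]card_ord -sum_nat_const.
apply: leq_sum => o _; rewrite (leq_trans _ (locf o)) // subset_leq_card //.
by apply/subsetP => j; rewrite inE.
Qed.

Definition in_band k j := (q ^+ k <= (fanout j)%:R) && ((fanout j)%:R < q ^+ k.+1).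

Lemma card_bands_le1 j : (#|[set k : 'I_d.+1 | in_band k j]| <= 1)%N.
Proof.
apply/card_le1_eqP => k k'; rewrite !inE.
wlog le_kk' : k k' / (k <= k')%N.
  by move=> wlog_k bk bk'; case: (leqP k k') => [|/ltnW] /wlog_k => [->|/(_ bk' bk)->].
case/andP=> _ lt_k /andP[ge_k' _]; apply/val_inj/eqP; rewrite eqn_leq le_kk' andbT leqNgt.
apply/negP => lt_kk'; have le_q := ler_weXn2l q_ge1 lt_kk'.
by have := lt_le_trans lt_k (le_trans le_q ge_k'); rewrite ltxx.
Qed.

Definition touches_band k o := [exists j in Idep f o, in_band k j].

Lemma sum_touches_band : (\sum_(k < d.+1) #|[set o | touches_band k o]| <= n * d)%N.
Proof.
rewrite sum_card_exchange -[n in (n * d)%N]card_ord -sum_nat_const.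
apply: leq_sum => o _; rewrite (leq_trans _ (locf o)) //.
have sub : [set k : 'I_d.+1 | touches_band k o] \subset
           \bigcup_(j in Idep f o) [set k : 'I_d.+1 | in_band k j].
  apply/subsetP => k; rewrite inE => /exists_inP[j jI bk].
  by apply/bigcupP; exists j; rewrite // inE.
rewrite (leq_trans (subset_leq_card sub)) // (leq_trans (card_bigcup_le _ _)) //.
by rewrite -[X in (_ <= X)%N]sum1_card leq_sum // => j _; apply: card_bands_le1.
Qed.

Lemma exists_sparse_band :
  exists k : 'I_d.+1, (n <= d.+1 * #|[set o | ~~ touches_band k o]|)%N.
Proof.
pose t (k : 'I_d.+1) := #|[set o | touches_band k o]|.
have [k _ min_k] := arg_minnP t (isT : (ord0 : 'I_d.+1) \in predT).
exists k.
have le_tk : (d.+1 * t k <= n * d)%N.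
  rewrite (leq_trans _ sum_touches_band) // -[X in (X * _)%N]card_ord -sum_nat_const.
  by apply: leq_sum => i _; apply: min_k.
have card_split : (#|[set o | ~~ touches_band k o]| + t k)%N = n.
  rewrite addnC -[RHS](card_ord n) -(cardsC [set o | touches_band k o]).
  by congr (_ + _)%N; apply: eq_card => o; rewrite !inE.
nia.
Qed.

Definition heavy k := [set j | q ^+ k.+1 <= (fanout j)%:R].

Lemma card_heavy k : #|heavy k|%:R * q ^+ k.+1 <= (n * d)%:R.
Proof.
have le_sum_heavy : #|heavy k|%:R * q ^+ k.+1 <= \sum_(j in heavy k) (fanout j)%:R.
  by rewrite mulr_natl -sumr_const; apply: ler_sum => j; rewrite inE.
apply: (le_trans le_sum_heavy); rewrite (le_trans (_ : _ <= \sum_j (fanout j)%:R)) //.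
  by rewrite [X in _ <= X](bigID (mem (heavy k))) /= lerDl sumr_ge0.
by rewrite -natr_sum ler_nat sum_fanout.
Qed.

Lemma card_overlap_off k o : ~~ touches_band k o ->
  #|[set o' | overlap_off f (heavy k) o o']|%:R <= d%:R * q ^+ k.
Proof.
rewrite negb_exists_in => /forall_inP off_band.
have sub : [set o' | overlap_off f (heavy k) o o'] \subset
           \bigcup_(j in Idep f o :\: heavy k) [set o' | j \in Idep f o'].
  apply/subsetP => o'; rewrite inE /overlap_off -setI_eq0 => /set0Pn[j].
  rewrite !inE => /andP[/andP[jS jo] /andP[_ jo']].
  by apply/bigcupP; exists j; rewrite ?inE ?jS.
have light j : j \in Idep f o :\: heavy k -> (fanout j)%:R <= q ^+ k.
  case/setDP => /off_band; rewrite inE /in_band -!ltNge => + lt_k.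
  by rewrite lt_k andbT -ltNge; apply: ltW.
apply: (le_trans (_ : _ <= \sum_(j in Idep f o :\: heavy k) (fanout j)%:R)).
  by rewrite -natr_sum ler_nat (leq_trans (subset_leq_card sub)) ?card_bigcup_le.
rewrite (le_trans (ler_sum _ light)) // sumr_const -[_ *+ _]mulr_natl.
rewrite ler_wpM2r ?exprn_ge0 ?(le_trans ler01) // ler_nat (leq_trans _ (locf o)) //.
by rewrite subset_leq_card ?subsetDl.
Qed.

Lemma exists_sparse_restriction :
  exists (S : {set 'I_m}) (r : nat) (a : R),
    [/\ 1 <= a <= q ^+ d, #|S|%:R * (a * q) <= (n * d)%:R,
        n%:R <= (d.+1)%:R * (1 + d%:R * a) * r%:R
      & forall rho : {ffun {j : 'I_m | j \in S} -> bool}, local_dr d r (restrict f rho)].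
Proof.
have [k le_n_G] := exists_sparse_band.
pose G := [set o | ~~ touches_band k o].
have degG o : o \in G ->
    #|[set o' in G | overlap_off f (heavy k) o o']|%:R + 1 <= 1 + d%:R * q ^+ k.
  rewrite inE addrC lerD2l => /card_overlap_off; apply: le_trans.
  by rewrite ler_nat subset_leq_card //; apply/subsetP => o'; rewrite !inE => /andP[].
have [I [_ indI] le_GI] := greedy_independent_set (overlap_off_sym f (heavy k)) degG.
exists (heavy k), #|I|, (q ^+ k); split.
- by rewrite exprn_ege1 // ler_weXn2l // -ltnS.
- by rewrite -exprSr card_heavy.
- by rewrite -mulrA (le_trans _ (ler_wpM2l _ le_GI)) // -natrM ler_nat.
- move=> rho; split; first exact: local_restrict.
  by exists I; split=> //; apply: non_connected_restrict.
Qed.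

End FanOut.

Lemma exists_nat_near (R : realFieldType) (N : nat) (x : R) :
  0 <= x -> x <= N%:R -> exists k : nat, `|x - k%:R| <= 1 / 2.
Proof.
elim: N x => [|N IH] x x_ge0 x_leN.
  by exists 0%N; rewrite subr0 ger0_norm //; lra.
have [/IH|gt_xN] := lerP x N%:R; first exact.
rewrite -natr1 in x_leN.
have [le_x|gt_x] := lerP x (N%:R + 1 / 2).
  by exists N; rewrite ler_distl; apply/andP; split; lra.
by exists N.+1; rewrite -natr1 ler_distl; apply/andP; split; lra.
Qed.

Lemma is_err_ub (R : realFieldType) (gamma e : R) (d : nat) :
  0 <= gamma -> gamma <= 1 -> is_err gamma d e -> e * 2 ^+ d.+1 <= 1.
Proof.
move=> gamma_ge0 gamma_le1 [_ min_e].
have p_gt0 : 0 < (2 : R) ^+ d by rewrite exprn_gt0.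
have le_x : gamma * 2 ^+ d <= (2 ^ d)%:R by rewrite natrX ler_piMl // ltW.
have [k near_k] := exists_nat_near (mulr_ge0 gamma_ge0 (ltW p_gt0)) le_x.
have := min_e k; rewrite -pmulrn.
have -> : gamma - k%:R / 2%:R ^+ d = (gamma * 2 ^+ d - k%:R) / 2 ^+ d.
  by field; rewrite gt_eqF.
rewrite normrM [`|_^-1|]gtr0_norm ?invr_gt0 // ler_pdivlMr // exprS mulrCA; lra.
Qed.

Lemma is_err_sqr_ub (R : realFieldType) (gamma e : R) (d : nat) :
  0 <= gamma -> gamma <= 1 -> is_err gamma d e -> (d.+1)%:R * e ^+ 2 <= 1.
Proof.
move=> gamma_ge0 gamma_le1 err_e; have le_e := is_err_ub gamma_ge0 gamma_le1 err_e.
have e_ge0 : 0 <= e by case: err_e => [[k ->] _].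
have le_d4 : (d.+1)%:R <= (2 : R) ^+ d.+1 ^+ 2.
  apply: (le_trans (_ : _ <= 2 ^+ d.+1)); first by rewrite -natrX ler_nat ltnW // ltn_expl.
  by rewrite expr2 ler_peMr ?exprn_ge0 ?exprn_ege1 ?ler1n.
have sq_le1 : (e * 2 ^+ d.+1) ^+ 2 <= 1 by rewrite expr_le1 ?mulr_ge0 ?exprn_ge0.
by apply: le_trans _ sq_le1; rewrite exprMn mulrC ler_wpM2l ?exprn_ge0.
Qed.

Section Threshold.
Variables (R : realFieldType) (d : nat) (e : R).
Hypotheses (d_ge1 : (1 <= d)%N) (e_gt0 : 0 < e) (de2_le1 : (d.+1)%:R * e ^+ 2 <= 1).

Definition threshold : R := 8 * d%:R ^+ 2 * (d.+1)%:R / e ^+ 2.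

Let d_ge1R : 1 <= d%:R :> R. Proof. by rewrite ler1n. Qed.
Let e2_gt0 : 0 < e ^+ 2. Proof. exact: exprn_gt0. Qed.
Let d1_ge1R : 1 <= (d.+1)%:R :> R. Proof. by rewrite ler1n. Qed.

Lemma threshold_ge1 : 1 <= threshold.
Proof.
have e2_le1 : e ^+ 2 <= 1 by apply: le_trans de2_le1; rewrite ler_peMl // ltW.
have : 1 <= d%:R ^+ 2 * (d.+1)%:R :> R by rewrite mulr_ege1 ?exprn_ege1.
rewrite /threshold ler_pdivlMr // mul1r -mulrA; lra.
Qed.

Variables (n r s : nat) (a : R).
Hypotheses (a_ge1 : 1 <= a) (le_n : n%:R <= (d.+1)%:R * (1 + d%:R * a) * r%:R).

Let le_n2 : n%:R <= (d.+1)%:R * (2 * d%:R * a) * r%:R.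
Proof.
rewrite (le_trans le_n) // ler_wpM2r // ler_wpM2l // -mulrA.
have := mulr_ege1 d_ge1R a_ge1; lra.
Qed.

Lemma threshold_card_bound :
  s%:R * (a * threshold) <= (n * d)%:R -> s%:R <= e ^+ 2 * r%:R / 4.
Proof.
move=> le_s; have a_gt0 := lt_le_trans ltr01 a_ge1.
pose P : R := 8 * d%:R ^+ 2 * (d.+1)%:R.
have P_gt0 : 0 < P by rewrite !mulr_gt0 ?exprn_gt0 ?ltr0n.
have le_sP : s%:R * P <= 2 * d%:R ^+ 2 * (d.+1)%:R * r%:R * e ^+ 2.
  rewrite -ler_pdivrMr // -[s%:R * P / _]mulrA -(ler_pM2l a_gt0) mulrCA.
  rewrite (le_trans le_s) // natrM (le_trans (ler_wpM2r _ le_n2)) //.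
  by rewrite [X in _ <= X](_ : _ = (d.+1)%:R * (2 * d%:R * a) * r%:R * d%:R) //; ring.
rewrite ler_pdivlMr // -(ler_pM2r P_gt0).
rewrite [X in X <= _](_ : _ = 4 * (s%:R * P)); last by ring.
rewrite [X in _ <= X](_ : _ = 4 * (2 * d%:R ^+ 2 * (d.+1)%:R * r%:R * e ^+ 2)).
- by rewrite ler_pM2l.
- by rewrite /P; ring.
Qed.

Lemma threshold_rate_bound :
  a <= threshold ^+ d -> n%:R * (e ^+ 2 / (16 * d%:R)) ^+ (2 * d + 1) <= r%:R.
Proof.
move=> le_aQ; set c := e ^+ 2 / _; set K := (d.+1)%:R * e ^+ 2.
have c_ge0 : 0 <= c by rewrite divr_ge0 ?ltW // mulr_gt0 ?ltr0n.
have le_nQ : n%:R <= (d.+1)%:R * (2 * d%:R * threshold ^+ d) * r%:R.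
  by rewrite (le_trans le_n2) // ler_wpM2r // ler_wpM2l // ler_wpM2l ?mulr_ge0.
have K_ge0 : 0 <= K by rewrite mulr_ge0 ?ltW.
have cQ_le1 : (d.+1)%:R * (2 * d%:R * threshold ^+ d) * c ^+ (2 * d + 1) <= 1.
  have Qc : threshold * c ^+ 2 = K / 32.
    by rewrite /threshold /c /K; field; rewrite ?gt_eqF ?ltr0n.
  have Dc : (d.+1)%:R * (2 * d%:R) * c = K / 8.
    by rewrite /c /K; field; rewrite ?gt_eqF ?ltr0n.
  rewrite addn1 exprS exprM (_ : _ * _ = K / 8 * (K / 32) ^+ d); last first.
    by rewrite -Qc -Dc [(threshold * _) ^+ d]exprMn; ring.
  have K_le1 : K <= 1 by [].
  rewrite mulr_ile1 ?exprn_ile1 ?exprn_ge0 ?divr_ge0 //; lra.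
rewrite (le_trans (ler_wpM2r (exprn_ge0 _ c_ge0) le_nQ)) //.
by rewrite mulrAC -[X in _ <= X]mul1r ler_wpM2r.
Qed.

End Threshold.

Theorem mainTheorem4 (R : realFieldType) (gamma : R) (d m n : nat) (e : R)
  (f : {ffun 'I_m -> bool} -> {ffun 'I_n -> bool}) :
  0 <= gamma -> gamma <= 1 -> (1 <= d)%N ->
  is_err gamma d e -> 0 < e ->
  local d f ->
  exists (S : {set 'I_m}) (r : nat),
    [/\ #|S|%:R <= e ^+ 2 * r%:R / 4,
        n%:R * (e ^+ 2 / (16 * d%:R)) ^+ (2 * d + 1) <= r%:R
      & forall rho : {ffun {j : 'I_m | j \in S} -> bool},
          local_dr d r (restrict f rho)].
Proof.
move=> gamma_ge0 gamma_le1 d_ge1 err_e e_gt0 locf.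
have de2_le1 := is_err_sqr_ub gamma_ge0 gamma_le1 err_e.
have [S [r [a [/andP[a_ge1 le_aQ] le_S le_n local_rho]]]] :=
  exists_sparse_restriction (threshold_ge1 d_ge1 e_gt0 de2_le1) locf.
exists S, r; split => //.
- exact: threshold_card_bound le_S.
- exact: threshold_rate_bound le_aQ.
Qed.
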